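(* Let $d\ge2$, $\Lambda_1,\ldots,\Lambda_d\in\mathcal{M}_2$ and let $C$ be a $d$-copula which is negatively quadrant dependent, i.e. $C(\mathbf{u})\le\Pi(\mathbf{u}):=\prod_{i=1}^du_i$ for all $\mathbf{u}\in[0,1]^d$. Then for every $k=1,\ldots,d$ and $\mathbf{w}\in\mathbb{R}_+^d$, $$\phi_C(\Lambda_1,\ldots,\Lambda_d)(\mathbf{w})\le\phi_\Pi(\Lambda_1,\ldots,\Lambda_d)(\mathbf{w})\le\min_{m\in\{1,\ldots,d\},\,m\neq k}\Lambda_k(w_m,w_k).$$
   Context: A $d$-copula is a distribution function on $[0,1]^d$ with uniform margins. $\mathcal{M}_2$ is the set of bivariate tail dependence functions $\Lambda(\mathbf{w};D)=\lim_{s\searrow0}D(s\mathbf{w})/s$ of $2$-copulas $D$ (defined on $\mathbb{R}_+^2$, $\mathbb{R}_+=[0,\infty)$); they are $1$-Lipschitz and concave with a.e. partial derivatives in $[0,1]$. For a $d$-copula $C$, $\phi_C(\Lambda_1,\ldots,\Lambda_d)(w_1,\ldots,w_d):=\int_0^\infty C(\partial_1\Lambda_1(t,w_1),\ldots,\partial_1\Lambda_d(t,w_d))\,dt$. *)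

From HB Require Import structures.
From mathcomp Require Import all_boot all_order all_algebra.
From mathcomp Require Import all_classical all_reals all_analysis.
Set Implicit Arguments. Unset Strict Implicit. Unset Printing Implicit Defensive.
Import Order.TTheory GRing.Theory Num.Theory.
Import numFieldNormedType.Exports.
Local Open Scope classical_set_scope.
Local Open Scope ring_scope.

Section Defs.
Variable R : realType.

Definition in_unit_cube (d : nat) (u : 'I_d -> R) : Prop :=
  forall i, 0 <= u i <= 1.

(* Values outside [0,1]^d are irrelevant. *)
Definition is_copula (d : nat) (C : ('I_d -> R) -> R) : Prop :=
  (forall u, in_unit_cube u -> (exists i, u i = 0) -> C u = 0) /\
  (forall u i, in_unit_cube u -> (forall j, j != i -> u j = 1) -> C u = u i) /\
  (* d-increasing: nonnegative C-volume of every box [a,b] in [0,1]^d *)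
  (forall a b, in_unit_cube a -> in_unit_cube b -> (forall i, a i <= b i) ->
     0 <= \sum_(S : {set 'I_d})
            (-1) ^+ #|S| * C (fun i => if i \in S then a i else b i)).

Definition Pi_cop (d : nat) (u : 'I_d -> R) : R := \prod_(i < d) u i.

Definition pt2 (x y : R) : 'I_2 -> R := fun i => if i == ord0 then x else y.

(* Lambda : R_+^2 -> R (given as a function on R x R, only its values on
   R_+^2 matter) belongs to M_2: it is the tail dependence function of some
   2-copula D, Lambda(w) = lim_{s -> 0+} D(s w)/s for all w in R_+^2. *)
Definition in_M2 (L : R -> R -> R) : Prop :=
  exists D : ('I_2 -> R) -> R, is_copula D /\
    forall w1 w2 : R, 0 <= w1 -> 0 <= w2 ->
      (fun s => D (pt2 (s * w1) (s * w2)) / s) @ 0^'+ --> L w1 w2.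

(* partial derivative of L in its first argument, taken as the right
   derivative (which exists everywhere on R_+ for L in M_2 and agrees with
   the a.e. partial derivative except on a countable set of t). *)
Definition d1 (L : R -> R -> R) (t w : R) : R :=
  lim ((fun h => (L (t + h) w - L t w) / h) @ 0^'+).

Definition phi (d : nat) (C : ('I_d -> R) -> R) (Ls : 'I_d -> R -> R -> R)
  (w : 'I_d -> R) : \bar R :=
  (\int[@lebesgue_measure R]_(t in `[(0:R)%R, +oo[%classic)
      (C (fun i => d1 (Ls i) t (w i)))%:E)%E.

End Defs.

(* Since C <= Pi on [0,1]^d and the one-sided derivatives d1 Lambda_i(t, w_i) lie
   in [0,1], the first inequality is monotonicity of the integral.  For the
   second, Pi is bounded by the product f g of its factors m and k, where
   f = d1 Lambda_m(., w_m) and g = d1 Lambda_k(., w_k) are nonincreasing with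
   values in [0,1], because each Lambda(., y) is nondecreasing, 1-Lipschitz and
   concave on R_+.  As int f <= sup Lambda_m(., w_m) <= w_m, the bathtub
   principle gives int f g <= int_0^{w_m} g = Lambda_k(w_m, w_k).
   Concavity comes from supermodularity and homogeneity of Lambda, which yield
   concavity along geometric triples m / r, m, m r; a strictly concave
   perturbation and the extreme value theorem upgrade this to full concavity.
   The integrals are compared on a grid of mesh dl with step slopes, which
   avoids the fundamental theorem of calculus for one-sided derivatives. *)

From HB Require Import structures.
From mathcomp Require Import all_boot all_order all_algebra.
From mathcomp Require Import all_classical all_reals all_analysis.
From mathcomp Require Import lra ring measurable_realfun.
Set Implicit Arguments. Unset Strict Implicit. Unset Printing Implicit Defensive.
Import Order.TTheory GRing.Theory Num.Theory.
Import numFieldNormedType.Exports.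
Local Open Scope ring_scope.

Definition nondecr_nonexpansive_Rplus (R : realType) (F : R -> R) : Prop :=
  forall x1 x2, 0 <= x1 <= x2 -> 0 <= F x2 - F x1 <= x2 - x1.

Definition concave_Rplus (R : realType) (F : R -> R) : Prop :=
  forall p q s, 0 <= p -> p < q -> q < s ->
  (s - q) * F p + (q - p) * F s <= (s - p) * F q.

(* Three-point concavity at m / r <= m <= m r, divided by (r - 1) m / r. *)
Definition geo_concave_Rplus (R : realType) (F : R -> R) : Prop :=
  forall m r, 0 < m -> 1 <= r -> F (m * r) + r * F (m / r) <= (1 + r) * F m.

Lemma ord2P (i : 'I_2) : i = ord0 \/ i = ord_max.
Proof. by case: i => [[|[|//]]] Hi; [left|right]; apply: val_inj. Qed.

Lemma set2P (S : {set 'I_2}) :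
  [\/ S = finset.set0, S = [set ord0], S = [set ord_max] | S = [set: 'I_2]].
Proof.
have eqS (A : {set 'I_2}) : (ord0 \in S) = (ord0 \in A) ->
    (ord_max \in S) = (ord_max \in A) -> S = A.
  by move=> e0 e1; apply/setP => i; case: (ord2P i) => ->.
case: (boolP (ord0 \in S)) => h0; case: (boolP (ord_max \in S)) => h1.
- by constructor 4; apply: eqS; rewrite !inE.
- by constructor 2; apply: eqS; rewrite !inE ?(negbTE h1).
- by constructor 3; apply: eqS; rewrite !inE ?(negbTE h0).
- by constructor 1; apply: eqS; rewrite !inE ?(negbTE h0) ?(negbTE h1).
Qed.

Lemma sum_set2 (V : nmodType) (F : {set 'I_2} -> V) :
  \sum_(S : {set 'I_2}) F S =
  F finset.set0 + F [set ord0] + F [set ord_max] + F [set: 'I_2].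
Proof.
have neq (A B : {set 'I_2}) :
    (ord0 \in A) != (ord0 \in B) \/ (ord_max \in A) != (ord_max \in B) -> A != B.
  by case=> /negP nAB; apply/negP => /eqP eAB; apply: nAB; rewrite eAB.
rewrite (bigD1 finset.set0) // (bigD1 [set ord0]) /=; last first.
  by repeat (apply/andP; split); apply: neq; rewrite !inE ?eqxx; auto.
rewrite (bigD1 [set ord_max]) /=; last first.
  by repeat (apply/andP; split); apply: neq; rewrite !inE ?eqxx; auto.
rewrite (bigD1 [set: 'I_2]) /=; last first.
  by repeat (apply/andP; split); apply: neq; rewrite !inE ?eqxx; auto.
rewrite big_pred0 ?addr0 ?addrA // => S.
by case: (set2P S) => ->; rewrite eqxx /= ?andbF.
Qed.

Section TwoCopula.
Variables (R : realType) (D : ('I_2 -> R) -> R).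
Hypothesis hD : is_copula D.
Local Notation P := (@pt2 R).

Lemma pt2_in_unit_cube u v : 0 <= u <= 1 -> 0 <= v <= 1 -> in_unit_cube (P u v).
Proof. by move=> hu hv i; rewrite /pt2; case: (i == ord0). Qed.

Lemma copula2_volume_ge0 u1 u2 v1 v2 : 0 <= u1 <= u2 -> u2 <= 1 ->
  0 <= v1 <= v2 -> v2 <= 1 ->
  0 <= D (P u2 v2) - D (P u1 v2) - D (P u2 v1) + D (P u1 v1).
Proof.
move=> /andP[u10 u12] u21 /andP[v10 v12] v21.
have a01 : in_unit_cube (P u1 v1).
  by apply: pt2_in_unit_cube; rewrite ?u10 ?v10 ?(le_trans u12 u21) ?(le_trans v12 v21).
have b01 : in_unit_cube (P u2 v2).
  by apply: pt2_in_unit_cube; rewrite ?u21 ?v21 ?(le_trans u10 u12) ?(le_trans v10 v12).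
have ab i : P u1 v1 i <= P u2 v2 i by rewrite /pt2; case: (i == ord0).
have := hD.2.2 _ _ a01 b01 ab; rewrite sum_set2.
have corner (S : {set 'I_2}) c e :
    (forall i, P c e i = if i \in S then P u1 v1 i else P u2 v2 i) ->
    (fun i => if i \in S then P u1 v1 i else P u2 v2 i) = P c e.
  by move=> hS; apply: funext => i; rewrite hS.
rewrite (corner _ u2 v2) => [|i]; last by rewrite inE.
rewrite (corner _ u1 v2) => [|i]; last by rewrite inE /pt2; case: (i == ord0).
rewrite (corner _ u2 v1) => [|i]; last by rewrite inE /pt2; case: (ord2P i) => ->.
rewrite (corner _ u1 v1) => [|i]; last by rewrite inE.
by rewrite cards0 cards1 cardsT card_ord cards1 !expr0 expr1 sqrrN expr1n !mul1r !mulN1r.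
Qed.

Lemma copula2_grounded_l v : 0 <= v <= 1 -> D (P 0 v) = 0.
Proof.
move=> hv; apply: hD.1; last by exists ord0.
by apply: pt2_in_unit_cube; rewrite // lexx ler01.
Qed.

Lemma copula2_grounded_r u : 0 <= u <= 1 -> D (P u 0) = 0.
Proof.
move=> hu; apply: hD.1; last by exists ord_max.
by apply: pt2_in_unit_cube; rewrite // lexx ler01.
Qed.

Lemma copula2_margin_l v : 0 <= v <= 1 -> D (P 1 v) = v.
Proof.
move=> hv; rewrite (hD.2.1 _ ord_max) //.
  by apply: pt2_in_unit_cube; rewrite // lexx ler01.
by move=> j; case: (ord2P j) => ->.
Qed.

Lemma copula2_margin_r u : 0 <= u <= 1 -> D (P u 1) = u.
Proof.
move=> hu; rewrite (hD.2.1 _ ord0) //.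
  by apply: pt2_in_unit_cube; rewrite // lexx ler01.
by move=> j; case: (ord2P j) => ->.
Qed.

Lemma copula2_increment_l u1 u2 v : 0 <= u1 <= u2 -> u2 <= 1 -> 0 <= v <= 1 ->
  0 <= D (P u2 v) - D (P u1 v) <= u2 - u1.
Proof.
move=> hu12 u21 hv; have /andP[u10 u12] := hu12; have /andP[v0 v1] := hv.
have hu1 : 0 <= u1 <= 1 by rewrite u10 (le_trans u12 u21).
have hu2 : 0 <= u2 <= 1 by rewrite u21 (le_trans u10 u12).
have h0v : (0:R) <= 0 <= v by rewrite lexx.
have := copula2_volume_ge0 hu12 u21 h0v v1.
have := copula2_volume_ge0 hu12 u21 hv (lexx 1).
rewrite !copula2_grounded_r // !copula2_margin_r // => h1 h2.
by apply/andP; split; lra.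
Qed.

Lemma copula2_le_r u v : 0 <= u <= 1 -> 0 <= v <= 1 -> D (P u v) <= v.
Proof.
move=> hu /andP[v0 v1]; have /andP[_ u1] := hu.
have h0v : (0:R) <= 0 <= v by rewrite lexx.
have := copula2_volume_ge0 hu (lexx 1) h0v v1.
by rewrite !copula2_grounded_r ?copula2_margin_l ?v0 //; lra.
Qed.

Lemma copula2_ge0 u v : 0 <= u <= 1 -> 0 <= v <= 1 -> 0 <= D (P u v).
Proof.
move=> /andP[u0 u1] /andP[v0 v1].
have h0u : (0:R) <= 0 <= u by rewrite lexx.
have h0v : (0:R) <= 0 <= v by rewrite lexx.
have := copula2_volume_ge0 h0u u1 h0v v1.
by rewrite copula2_grounded_r ?copula2_grounded_l ?v0 ?u0 ?ler01 ?lexx //; lra.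
Qed.

End TwoCopula.

Local Open Scope classical_set_scope.

Lemma near_right0_scale_le1 {R : realType} {M : R} : 0 <= M ->
  \forall s \near 0^'+, 0 < s /\ s * M <= 1.
Proof.
move=> M0; have M1 : 0 < M + 1 by rewrite ltr_wpDl.
exists (M + 1)^-1 => /=; first by rewrite invr_gt0.
move=> s /=; rewrite sub0r normrN => hs s0; split => //.
by move: hs; rewrite gtr0_norm // -div1r ltr_pdivlMr //; nra.
Qed.

Lemma cvg_scale_at_right0 {R : realType} (c : R) : 0 < c ->
  (fun s => c * s) @ 0^'+ --> (0 : R)^'+.
Proof.
move=> c0 A [e /= e0 He]; exists (e / c) => /=; first by rewrite divr_gt0.
move=> s /=; rewrite !sub0r !normrN => hs s0; apply: He; last by rewrite mulr_gt0.
by rewrite /= sub0r normrN normrM (gtr0_norm c0) mulrC -ltr_pdivlMr.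
Qed.

Section TailDependence.
Variables (R : realType) (L : R -> R -> R) (D : ('I_2 -> R) -> R).
Hypothesis hD : is_copula D.
Hypothesis hlim : forall w1 w2 : R, 0 <= w1 -> 0 <= w2 ->
  (fun s => D (pt2 (s * w1) (s * w2)) / s) @ 0^'+ --> L w1 w2.
Local Notation P := (@pt2 R).

Lemma tdf_increment x1 x2 y : 0 <= x1 <= x2 -> 0 <= y ->
  0 <= L x2 y - L x1 y <= x2 - x1.
Proof.
move=> /andP[x10 x12] y0; have x20 := le_trans x10 x12.
have lim12 : (fun s => D (P (s * x2) (s * y)) / s - D (P (s * x1) (s * y)) / s)
    @ 0^'+ --> L x2 y - L x1 y by apply: cvgB; apply: hlim.
have small := near_right0_scale_le1 (addr_ge0 x20 y0).
have incr : \forall s \near 0^'+, 0 < s /\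
    0 <= D (P (s * x2) (s * y)) - D (P (s * x1) (s * y)) <= s * x2 - s * x1.
  apply: filterS small => s [s0 sM]; split => //.
  by apply: (copula2_increment_l hD); try (apply/andP; split); nra.
apply/andP; split.
- apply: (cvgr_to_ge lim12); apply: filterS incr => s [s0 /andP[h _]].
  by rewrite -mulrBl divr_ge0 // ltW.
- apply: (cvgr_to_le lim12); apply: filterS incr => s [s0 /andP[_ h]].
  by rewrite -mulrBl ler_pdivrMr //; nra.
Qed.

Lemma tdf_bounds x y : 0 <= x -> 0 <= y -> 0 <= L x y <= y.
Proof.
move=> x0 y0; have small := near_right0_scale_le1 (addr_ge0 x0 y0).
apply/andP; split.
- apply: (cvgr_to_ge (hlim x0 y0)); apply: filterS small => s [s0 sM].
  by apply: divr_ge0 (ltW s0); apply: (copula2_ge0 hD); apply/andP; split; nra.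
- apply: (cvgr_to_le (hlim x0 y0)); apply: filterS small => s [s0 sM].
  rewrite ler_pdivrMr // [y * s]mulrC.
  by apply: (copula2_le_r hD); apply/andP; split; nra.
Qed.

Lemma tdf_0l y : 0 <= y -> L 0 y = 0.
Proof.
move=> y0; have small := near_right0_scale_le1 y0.
have lim0 := hlim (lexx 0) y0.
have vanish : \forall s \near 0^'+, D (P (s * 0) (s * y)) / s = 0.
  apply: filterS small => s [s0 sM].
  by rewrite mulr0 (copula2_grounded_l hD) ?mul0r //; apply/andP; split; nra.
apply/eqP; rewrite eq_le; apply/andP; split.
- by apply: (cvgr_to_le lim0); apply: filterS vanish => s ->.
- by apply: (cvgr_to_ge lim0); apply: filterS vanish => s ->.
Qed.

Lemma tdf_supermodular x1 x2 y1 y2 : 0 <= x1 <= x2 -> 0 <= y1 <= y2 ->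
  0 <= L x2 y2 - L x1 y2 - L x2 y1 + L x1 y1.
Proof.
move=> /andP[x10 x12] /andP[y10 y12].
have x20 := le_trans x10 x12; have y20 := le_trans y10 y12.
have lim_vol : (fun s => D (P (s * x2) (s * y2)) / s - D (P (s * x1) (s * y2)) / s
    - D (P (s * x2) (s * y1)) / s + D (P (s * x1) (s * y1)) / s) @ 0^'+ -->
    L x2 y2 - L x1 y2 - L x2 y1 + L x1 y1.
  by apply: cvgD; [apply: cvgB; [apply: cvgB|]|]; apply: hlim.
apply: (cvgr_to_ge lim_vol).
apply: filterS (near_right0_scale_le1 (addr_ge0 x20 y20)) => s [s0 sM].
rewrite -!mulrBl -mulrDl; apply: divr_ge0 (ltW s0).
by apply: (copula2_volume_ge0 hD); try (apply/andP; split); nra.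
Qed.

Lemma tdf_homogeneous c x y : 0 < c -> 0 <= x -> 0 <= y ->
  L (c * x) (c * y) = c * L x y.
Proof.
move=> c0 x0 y0.
have cx0 := mulr_ge0 (ltW c0) x0; have cy0 := mulr_ge0 (ltW c0) y0.
have scaled : (fun s => D (P (s * (c * x)) (s * (c * y))) / s) @ 0^'+ --> c * L x y.
  have -> : (fun s => D (P (s * (c * x)) (s * (c * y))) / s) =
      (fun s => c * (D (P (c * s * x) (c * s * y)) / (c * s))).
    apply: funext => s; rewrite !mulrA [s * c]mulrC.
    have [->|s0] := eqVneq s 0; first by rewrite !(mulr0, invr0).
    by field; rewrite s0 gt_eqF.
  exact: cvgM (cvg_cst _) (cvg_comp _ _ (cvg_scale_at_right0 c0) (hlim x0 y0)).
exact: cvg_unique _ (hlim cx0 cy0) scaled.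
Qed.

Lemma tdf_geo_concave y : 0 <= y -> geo_concave_Rplus (L^~ y).
Proof.
move=> y0 m r m0 r1; have r0 : 0 < r := lt_le_trans ltr01 r1.
have hx : 0 <= m <= m * r by rewrite ltW // ler_peMr // ltW.
have hy : 0 <= y <= r * y by rewrite y0 ler_peMl.
(* Supermodularity on [m, m r] x [y, r y]; homogeneity moves two corners to level y. *)
have e1 : L (m * r) (r * y) = r * L m y by rewrite mulrC tdf_homogeneous // ltW.
have e2 : L m (r * y) = r * L (m / r) y.
  by rewrite -{1}(divfK (lt0r_neq0 r0) m) mulrC tdf_homogeneous // divr_ge0 // ltW.
by have := tdf_supermodular hx hy; rewrite e1 e2; lra.
Qed.

End TailDependence.

Lemma continuous_nonexpansive (R : realType) (G : R -> R) :
  (forall x y, `|G x - G y| <= `|x - y|) -> continuous G.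
Proof.
move=> hG x; apply/cvgrPdist_lt => e e0; near=> y.
by apply: le_lt_trans (hG x y) _; near: y; apply: cvgr_dist_lt.
Unshelve. all: by end_near. Qed.

Lemma strict_geo_concave_min_at_ends (R : realType) (G : R -> R) b a :
  0 <= b <= a -> continuous G ->
  (forall c r, 0 < c -> 1 < r -> G (c * r) + r * G (c / r) < (1 + r) * G c) ->
  forall x, b <= x <= a -> Num.min (G b) (G a) <= G x.
Proof.
move=> /andP[b0 ba] Gc Ggeo x xba.
have [c /andP[bc ca] Gmin] := EVT_min ba (continuous_subspaceT Gc).
apply: le_trans (Gmin _ xba).
have [->|cb] := eqVneq c b; first by rewrite ge_min lexx.
have [->|can] := eqVneq c a; first by rewrite ge_min lexx orbT.
have {cb}bc : b < c by rewrite lt_neqAle eq_sym cb.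
have {can}ca : c < a by rewrite lt_neqAle can.
have c0 : 0 < c := le_lt_trans b0 bc.
have bc0 : 0 < b + c := ltr_wpDl b0 c0.
(* small enough for c / r >= (b + c) / 2 and c * r <= a *)
pose r := Num.min (a / c) (2 * c / (b + c)).
have r1 : 1 < r by rewrite lt_min !ltr_pdivlMr // !mul1r ca; lra.
have cr_a : c * r <= a by rewrite mulrC -ler_pdivlMr // ge_min lexx.
have b_cr : b <= c / r.
  rewrite ler_pdivlMr ?(lt_trans ltr01) //.
  have : r <= 2 * c / (b + c) by rewrite ge_min lexx orbT.
  rewrite ler_pdivlMr // => h; nra.
have Gcr : G c <= G (c * r).
  by apply: Gmin; rewrite in_itv /= cr_a andbT (le_trans (ltW bc)) // ler_peMr ?ltW.
have Gc_r : G c <= G (c / r).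
  apply: Gmin; rewrite in_itv /= b_cr /= (le_trans _ (ltW ca)) //.
  by rewrite ler_pdivrMr ?(lt_trans ltr01) // ler_peMr ?ltW.
have := Ggeo c r c0 r1; have r0 : 0 < r := lt_trans ltr01 r1; nra.
Qed.

Section GeometricConcavity.
Variables (R : realType) (F : R -> R).
Hypothesis F_incr : nondecr_nonexpansive_Rplus F.
Hypothesis F_geo : geo_concave_Rplus F.

Let Fext x := F (Num.max x 0).

Let Fext_continuous : continuous Fext.
Proof.
apply: continuous_nonexpansive => x y.
wlog xy : x y / x <= y.
  by move=> H; case: (leP x y) => [/H//|/ltW /H]; rewrite distrC [`|y - x|]distrC.
have xy0 : 0 <= Num.max x 0 <= Num.max y 0.
  by rewrite le_max lexx orbT /= ge_max !le_max lexx xy orbT.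
have /andP[h0 h1] := F_incr xy0.
rewrite /Fext distrC ger0_norm // distrC ger0_norm ?subr_ge0 //.
by apply: le_trans h1 _; case: (leP x 0); case: (leP y 0); lra.
Qed.

(* The bump e (x - b) (a - x) vanishes at b and a and makes geometric concavity
   strict, so the minimum on [b, a] is attained at an end point. *)
Let perturb b a al e x := Fext x - al * x + e * ((x - b) * (a - x)).

Let perturb_continuous b a al e : continuous (perturb b a al e).
Proof.
move=> x; apply: cvgD; first apply: cvgB.
- exact: Fext_continuous.
- by apply: cvgM; [exact: cvg_cst | exact: cvg_id].
- apply: cvgM; first exact: cvg_cst.
  by apply: cvgM; apply: cvgB; exact: cvg_cst || exact: cvg_id.
Qed.

Let perturb_strict_geo b a al e c r : 0 < e -> 0 < c -> 1 < r ->
  perturb b a al e (c * r) + r * perturb b a al e (c / r) <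
  (1 + r) * perturb b a al e c.
Proof.
move=> e0 c0 r1; have r0 : 0 < r := lt_trans ltr01 r1.
have pos x : 0 < x -> Fext x = F x by move=> x0; rewrite /Fext max_l ?ltW.
have c_r0 : 0 < c / r by rewrite divr_gt0.
have cr0 : 0 < c * r by rewrite mulr_gt0.
rewrite /perturb !pos //.
have := F_geo c0 (ltW r1).
set v := c / r; have -> : c = v * r by rewrite /v divfK ?gt_eqF.
have : 0 < e * (v ^+ 2 * r * (r - 1) ^+ 2 * (r + 1)).
  by rewrite !mulr_gt0 // ?invr_gt0 ?subr_gt0 //; lra.
move: (F _) (F _) (F _) => Fu Fv Fc gap geo.
rewrite -subr_lt0 (_ : _ - _ = Fc + r * Fv - (1 + r) * Fu
  - e * (v ^+ 2 * r * (r - 1) ^+ 2 * (r + 1))); first lra.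
by ring.
Qed.

Lemma geo_concave_concave : concave_Rplus F.
Proof.
move=> p q s p0 pq qs; have ps := lt_trans pq qs.
have sp0 : 0 < s - p by rewrite subr_gt0.
pose al := (F s - F p) / (s - p).
have Fx y : 0 <= y -> Fext y = F y by move=> y0; rewrite /Fext max_l.
have at_ends e x : x = p \/ x = s -> perturb p s al e x = F p - al * p.
  case=> ->; rewrite /perturb !(subrr, mul0r, mulr0, addr0) Fx ?(le_trans p0 (ltW ps)) //.
  by rewrite /al; field; rewrite gt_eqF.
have above_chord : F p - al * p <= F q - al * q.
  apply/ler_addgt0Pr => e e0.
  have K0 : 0 < (q - p) * (s - q) by rewrite mulr_gt0 ?subr_gt0.
  pose G := perturb p s al (e / ((q - p) * (s - q))).
  have : Num.min (G p) (G s) <= G q.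
    apply: strict_geo_concave_min_at_ends; rewrite ?p0 ?ltW //.
      exact: perturb_continuous.
    by move=> c r c0 r1; apply: perturb_strict_geo; rewrite ?divr_gt0.
  rewrite /G (at_ends _ p (or_introl erefl)) (at_ends _ s (or_intror erefl)) minxx.
  by rewrite /perturb Fx ?(le_trans p0 (ltW pq)) // divfK ?gt_eqF.
have {above_chord}: (s - p) * (F p + al * (q - p)) <= (s - p) * F q.
  by rewrite ler_pM2l //; lra.
have sal : (s - p) * al = F s - F p by rewrite mulrC /al divfK ?gt_eqF.
by rewrite mulrDr mulrA sal; nra.
Qed.

End GeometricConcavity.

(* d1 L t w is convertible to rderiv (L^~ w) t. *)
Definition rderiv (R : realType) (F : R -> R) (t : R) : R :=
  lim ((fun h => (F (t + h) - F t) / h) @ 0^'+).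

Section RightDerivative.
Variables (R : realType) (F : R -> R).
Hypothesis F_incr : nondecr_nonexpansive_Rplus F.
Hypothesis F_concave : concave_Rplus F.

Local Notation slope t h := ((F (t + h) - F t) / h).

Lemma slope_bounds t h : 0 <= t -> 0 < h -> 0 <= slope t h <= 1.
Proof.
move=> t0 h0; have /andP[inc lip] : 0 <= F (t + h) - F t <= t + h - t.
  by apply: F_incr; rewrite t0 lerDl ltW.
rewrite addrAC subrr add0r in lip.
apply/andP; split; first by apply: divr_ge0 inc (ltW h0).
by rewrite ler_pdivrMr // mul1r.
Qed.

Lemma slope_nonincreasing t h1 h2 : 0 <= t -> 0 < h1 <= h2 ->
  slope t h2 <= slope t h1.
Proof.
move=> t0 /andP[h10 h12]; have h20 := lt_le_trans h10 h12.
have [<-//|h12'] := eqVneq h1 h2.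
have := F_concave t0 (_ : t < t + h1) (_ : t + h1 < t + h2).
rewrite ltrDl ltrD2l h10 lt_neqAle h12' h12 => /(_ isT isT).
rewrite ler_pdivrMr // mulrAC ler_pdivlMr //; nra.
Qed.

Lemma rderiv_cvg t : 0 <= t -> cvg ((fun h => slope t h) @ 0^'+).
Proof.
move=> t0; apply: nonincreasing_at_right_is_cvgr.
- apply: nearW => x h1 h2; rewrite !in_itv /= => /andP[h10 _] /andP[h20 _] h12.
  by apply: slope_nonincreasing; rewrite ?h10.
- apply: nearW => x; exists 1 => y [h]; rewrite /= in_itv /= => /andP[h0 _] <-.
  by have /andP[] := slope_bounds t0 h0.
Qed.

Lemma rderiv_bounds t : 0 <= t -> 0 <= rderiv F t <= 1.
Proof.
move=> t0; have pos := @nbhs_right_gt R 0.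
apply/andP; split; [apply: limr_ge (rderiv_cvg t0) _ | apply: limr_le (rderiv_cvg t0) _].
all: by apply: filterS pos => h h0; have /andP[] := slope_bounds t0 h0.
Qed.

Lemma slope_le_rderiv t h : 0 <= t -> 0 < h -> slope t h <= rderiv F t.
Proof.
move=> t0 h0; apply: limr_ge (rderiv_cvg t0) _; near=> h'.
apply: slope_nonincreasing => //; apply/andP; split; near: h'.
- exact: nbhs_right_gt.
- exact: nbhs_right_le.
Unshelve. all: by end_near. Qed.

Lemma rderiv_le_slope p t : 0 <= p -> p < t -> rderiv F t <= (F t - F p) / (t - p).
Proof.
move=> p0 pt; have tp : 0 < t - p by rewrite subr_gt0.
apply: limr_le (rderiv_cvg (le_trans p0 (ltW pt))) _; near=> h.
have h0 : 0 < h by near: h; exact: nbhs_right_gt.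
have := F_concave p0 pt (_ : t < t + h); rewrite ltrDl h0 addrAC subrr add0r => /(_ isT).
by rewrite ler_pdivrMr // mulrAC ler_pdivlMr //; nra.
Unshelve. all: by end_near. Qed.

Lemma rderiv_nonincreasing t t' : 0 <= t -> t <= t' -> rderiv F t' <= rderiv F t.
Proof.
move=> t0 tt'; have [<-//|neq] := eqVneq t t'.
have lt : t < t' by rewrite lt_neqAle neq.
apply: le_trans (rderiv_le_slope t0 lt) _.
have := slope_le_rderiv t0 (_ : 0 < t' - t).
by rewrite subr_gt0 [t + _]addrC subrK => /(_ lt).
Qed.

Lemma rderiv_le_chord p q t : 0 <= p -> p < q -> q <= t ->
  rderiv F t <= (F q - F p) / (q - p).
Proof.
move=> p0 pq qt; apply: le_trans (rderiv_le_slope p0 pq).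
exact: rderiv_nonincreasing (le_trans p0 (ltW pq)) qt.
Qed.

End RightDerivative.

Section Integration.
Variable R : realType.
Local Notation mu := (@lebesgue_measure R).

(* Without measurability: the integrand of phi C is not known to be measurable. *)
Lemma le_integral_nonmeas (D : set R) (f g : R -> \bar R) :
  (forall x, D x -> (0 <= g x)%E) -> (forall x, D x -> (f x <= g x)%E) ->
  (\int[mu]_(x in D) f x <= \int[mu]_(x in D) g x)%E.
Proof.
move=> g0 fg; rewrite integralE.
apply: (@le_trans _ _ (\int[mu]_(x in D) f^\+ x - 0)%E).
  by apply: leeB => //; apply: integral_ge0 => x _; exact: funeneg_ge0.
rewrite sube0 ge0_integralE; last by move=> x _; exact: funepos_ge0.
rewrite [leRHS]ge0_integralE //.
apply: le_ereal_sup => _ [h hh <-]; exists h => //= x.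
apply: le_trans (hh x) _; rewrite /patch; case: ifP => // /set_mem Dx.
by rewrite funeposE ge_max fg // g0.
Qed.

Lemma bathtub_sum (x y : nat -> R) (n N : nat) : (n <= N)%N ->
  (forall j, 0 <= x j <= 1) -> (forall j, 0 <= y j) -> nonincreasing_seq y ->
  \sum_(0 <= j < N) x j <= n%:R ->
  \sum_(0 <= j < N) x j * y j <= \sum_(0 <= j < n) y j.
Proof.
move=> nN x01 y0 ydec.
have head : \sum_(0 <= j < n) x j * y j <= \sum_(0 <= j < n) (y j + (x j - 1) * y n).
  apply: ler_sum_nat => j /andP[_ jn]; have /andP[? ?] := x01 j.
  by have := ydec _ _ (ltnW jn); nra.
have tail : \sum_(n <= j < N) x j * y j <= \sum_(n <= j < N) x j * y n.
  apply: ler_sum_nat => j /andP[nj _]; have /andP[? ?] := x01 j.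
  by have := ydec _ _ nj; nra.
rewrite !(big_cat_nat (leq0n n) nN) /= => sum_x.
rewrite big_split /= -mulr_suml sumrB sumr_const_nat subn0 in head.
rewrite -mulr_suml in tail.
have slack : 0 <= n%:R - \sum_(0 <= j < n) x j - \sum_(n <= j < N) x j by lra.
by have := mulr_ge0 slack (y0 n); nra.
Qed.

Lemma integral_le_step_sum (h : R -> R) (c : nat -> R) (dl : R) (k : nat) :
  0 < dl -> measurable_fun setT h -> (forall x, 0 <= h x) ->
  (forall i x, i%:R * dl < x <= i.+1%:R * dl -> h x <= c i) ->
  (\int[mu]_(x in `[0%R, (k%:R * dl)%R]) (h x)%:E <= (\sum_(0 <= i < k) c i * dl)%:E)%E.
Proof.
move=> dl0 mh h0 hc; elim: k => [|k IH].
  by rewrite mul0r set_itv1 integral_set1 big_geq.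
have k0 : 0 <= k%:R * dl := mulr_ge0 (ler0n _ _) (ltW dl0).
have kk : k%:R * dl <= k.+1%:R * dl by rewrite ler_pM2r // ler_nat.
rewrite big_nat_recr //= EFinD.
rewrite (@itv_bndbnd_setU _ _ _ (BRight (k%:R * dl))) ?bnd_simp //.
rewrite ge0_integral_setU //=; first last.
- rewrite disj_set2E; apply/eqP/seteqP; split => // x [].
  rewrite /= !in_itv /= => /andP[_ a] /andP[b _].
  by have := lt_le_trans b a; rewrite ltxx.
- by move=> x _; rewrite lee_fin.
- by apply/measurable_EFinP; apply: measurable_funTS.
apply: leeD => //.
apply: (@le_trans _ _ (\int[mu]_(x in `](k%:R * dl)%R, (k.+1%:R * dl)%R]) (c k)%:E)%E).
  apply: ge0_le_integral => //.
  - by move=> x _; rewrite lee_fin.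
  - by apply/measurable_EFinP; apply: measurable_funTS.
  - by move=> x; rewrite /= in_itv /= => hx; rewrite lee_fin hc.
rewrite integral_cst //= lebesgue_measure_itv /= lte_fin ltr_pM2r // ltr_nat ltnSn.
by rewrite -EFinB -EFinM lee_fin -mulrBl -natrB // subSnn mul1r.
Qed.

End Integration.

Definition step_slope (R : realType) (F : R -> R) (dl : R) (i : nat) : R :=
  (F (i.+1%:R * dl) - F (i%:R * dl)) / dl.

Section StepSlopes.
Variables (R : realType) (F : R -> R) (dl : R).
Hypothesis F_incr : nondecr_nonexpansive_Rplus F.
Hypothesis F_concave : concave_Rplus F.
Hypothesis dl0 : 0 < dl.

Let grid_ge0 (i : nat) : 0 <= i%:R * dl := mulr_ge0 (ler0n _ _) (ltW dl0).
Let gridS (i : nat) : i.+1%:R * dl = i%:R * dl + dl.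
Proof. by rewrite -natr1 mulrDl mul1r. Qed.

Lemma step_slope_bounds i : 0 <= step_slope F dl i <= 1.
Proof. by rewrite /step_slope gridS; apply: slope_bounds. Qed.

Lemma step_slope_nonincreasing : nonincreasing_seq (step_slope F dl).
Proof.
apply/nonincreasing_seqP => i; rewrite /step_slope ler_pM2r ?invr_gt0 //.
have := F_concave (grid_ge0 i) (_ : _ < i.+1%:R * dl) (_ : _ < i.+2%:R * dl).
rewrite [i.+2%:R * _]gridS !gridS !ltrDl dl0 => /(_ isT isT).
have -> : i%:R * dl + dl + dl - (i%:R * dl + dl) = dl by ring.
have -> : i%:R * dl + dl - i%:R * dl = dl by ring.
have -> : i%:R * dl + dl + dl - i%:R * dl = 2 * dl by ring.
move: (F _) (F _) (F _) => a b c h.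
have : 0 <= dl * ((a - c) - (b - a)) by lra.
by rewrite pmulr_rge0 // subr_ge0.
Qed.

Lemma sum_step_slope n :
  \sum_(0 <= i < n) step_slope F dl i * dl = F (n%:R * dl) - F 0.
Proof.
under eq_bigr do rewrite /step_slope divfK ?gt_eqF //.
by rewrite telescope_sumr // mul0r.
Qed.

Lemma rderiv_le_step_slope i x : i.+1%:R * dl <= x -> rderiv F x <= step_slope F dl i.
Proof.
move=> ix; have lt : i%:R * dl < i.+1%:R * dl by rewrite gridS ltrDl.
have := rderiv_le_chord F_incr F_concave (grid_ge0 i) lt ix.
by rewrite [in X in _ / X]gridS addrAC subrr add0r.
Qed.

End StepSlopes.

Section ProductBound.
Variables (R : realType) (F G : R -> R) (a : R).
Hypotheses (F_incr : nondecr_nonexpansive_Rplus F) (F_concave : concave_Rplus F).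
Hypotheses (G_incr : nondecr_nonexpansive_Rplus G) (G_concave : concave_Rplus G).
Hypothesis F_le : forall x, 0 <= x -> F x <= a.
Hypotheses (F0 : F 0 = 0) (G0 : G 0 = 0).
Local Notation mu := (@lebesgue_measure R).

(* Extended to the negatives by f 0, so that f is nonincreasing, hence measurable. *)
Let f t := rderiv F (Num.max t 0).
Let g t := rderiv G (Num.max t 0).

Let max0_ge0 (t : R) : 0 <= Num.max t 0.
Proof. by rewrite le_max lexx orbT. Qed.

Let f_bounds t : 0 <= f t <= 1. Proof. exact: rderiv_bounds. Qed.
Let g_bounds t : 0 <= g t <= 1. Proof. exact: rderiv_bounds. Qed.

Let fg_ge0 t : 0 <= f t * g t.
Proof.
by have /andP[? _] := f_bounds t; have /andP[? _] := g_bounds t; exact: mulr_ge0.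
Qed.

Let fg_measurable : measurable_fun setT (fun t => f t * g t).
Proof.
have max0_homo (t t' : R) : t <= t' -> Num.max t 0 <= Num.max t' 0.
  by move=> tt'; rewrite ge_max !le_max lexx tt' orbT.
apply: measurable_funM; apply: nonincreasing_measurable => // t t' tt'.
- exact: rderiv_nonincreasing (max0_ge0 _) (max0_homo _ _ tt').
- exact: rderiv_nonincreasing (max0_ge0 _) (max0_homo _ _ tt').
Qed.

(* On the cell ]i.+1 dl, i.+2 dl], f and g are bounded by their step slopes on
   the i-th cell; the bathtub principle then bounds the resulting sum by G. *)
Let integral_grid_le dl n N : 0 < dl -> a <= n%:R * dl -> (n <= N)%N ->
  (\int[mu]_(t in `[0%R, (N.+1%:R * dl)%R]) (f t * g t)%:E <= (dl + G (n%:R * dl))%:E)%E.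
Proof.
move=> dl0 an nN; set sF := step_slope F dl; set sG := step_slope G dl.
pose c i := if i is j.+1 then sF j * sG j else 1.
apply: (le_trans (integral_le_step_sum (c := c) _ dl0 fg_measurable fg_ge0 _)).
  move=> i x /andP[ix xi].
  have /andP[f0 f1] := f_bounds x; have /andP[g0 g1] := g_bounds x.
  case: i ix xi => [|i] ix xi; first exact: mulr_ile1.
  have x0 : 0 < x := le_lt_trans (mulr_ge0 (ler0n _ _) (ltW dl0)) ix.
  apply: ler_pM => //; rewrite /f /g max_l ?(ltW x0) //;
    exact: rderiv_le_step_slope (ltW ix).
rewrite lee_fin big_nat_recl //= mul1r lerD2l -mulr_suml.
have sF_bounds := step_slope_bounds F_incr dl0.
have sG_ge0 i : 0 <= sG i by have /andP[] := step_slope_bounds G_incr dl0 i.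
have sum_sF : \sum_(0 <= i < N) sF i <= n%:R.
  rewrite -(ler_pM2r dl0) mulr_suml sum_step_slope // F0 subr0.
  exact: le_trans (F_le (mulr_ge0 (ler0n _ _) (ltW dl0))) an.
have := bathtub_sum nN sF_bounds sG_ge0 (step_slope_nonincreasing G_concave dl0) sum_sF.
by rewrite -(ler_pM2r dl0) [X in _ <= X -> _]mulr_suml sum_step_slope // G0 subr0.
Qed.

Lemma integral_rderiv_mul_le :
  (\int[mu]_(t in `[0%R, +oo[) (f t * g t)%:E <= (G a)%:E)%E.
Proof.
have a0 : 0 <= a by rewrite -F0 F_le.
rewrite ge0_integral_ereal_sup //; apply: ge_ereal_sup => _ [j _ <-].
apply/lee_addgt0Pr => e e0; pose dl := e / 2; have dl0 : 0 < dl by rewrite divr_gt0.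
have /andP[a_ge a_lt] := trunc_itv (divr_ge0 a0 (ltW dl0)).
have /andP[_ j_lt] := trunc_itv (divr_ge0 (ler0n _ j.+1) (ltW dl0)).
pose n := (Num.trunc (a / dl)).+1; pose N := (n + Num.trunc (j.+1%:R / dl))%N.
have an : a <= n%:R * dl by rewrite -ler_pdivrMr // ltW.
have na : n%:R * dl <= a + dl.
  by rewrite /n -natr1 mulrDl mul1r lerD2r -ler_pdivlMr.
have nN : (n <= N)%N by rewrite leq_addr.
have jN : j.+1%:R <= N.+1%:R * dl.
  by rewrite -ler_pdivrMr // (le_trans (ltW j_lt)) // ler_nat ltnS leq_addl.
apply: le_trans (le_trans _ (integral_grid_le dl0 an nN)) _.
  apply: ge0_subset_integral => //.
  - by apply/measurable_EFinP; apply: measurable_funTS.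
  - by move=> x _; rewrite lee_fin.
  - by apply: subset_itvl; rewrite bnd_simp.
have /andP[_ Gna] : 0 <= G (n%:R * dl) - G a <= n%:R * dl - a by rewrite G_incr ?a0.
have edl : dl + dl = e by rewrite /dl; field.
by rewrite lee_fin; lra.
Qed.

End ProductBound.

Section M2.
Variables (R : realType) (L : R -> R -> R).
Hypothesis hL : in_M2 L.

Lemma in_M2_nondecr_nonexpansive y : 0 <= y -> nondecr_nonexpansive_Rplus (L^~ y).
Proof.
by move=> y0 x1 x2 hx; case: hL => D [hD hlim]; exact: (tdf_increment hD hlim hx y0).
Qed.

Lemma in_M2_concave y : 0 <= y -> concave_Rplus (L^~ y).
Proof.
move=> y0; apply: geo_concave_concave; first exact: in_M2_nondecr_nonexpansive.
by case: hL => D [hD hlim]; exact: (tdf_geo_concave hD hlim y0).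
Qed.

Lemma in_M2_bounds x y : 0 <= x -> 0 <= y -> 0 <= L x y <= y.
Proof. by case: hL => D [hD hlim]; exact: (tdf_bounds hD hlim). Qed.

Lemma in_M2_0l y : 0 <= y -> L 0 y = 0.
Proof. by case: hL => D [hD hlim]; exact: (tdf_0l hD hlim). Qed.

Lemma in_M2_d1_bounds t y : 0 <= t -> 0 <= y -> 0 <= d1 L t y <= 1.
Proof.
move=> t0 y0.
exact: (rderiv_bounds (in_M2_nondecr_nonexpansive y0) (in_M2_concave y0) t0).
Qed.

End M2.

Lemma Pi_cop_le_mul2 (R : realType) (d : nat) (u : 'I_d -> R) (m k : 'I_d) :
  m != k -> in_unit_cube u -> Pi_cop u <= u m * u k.
Proof.
move=> mk u01; have /andP[m0 m1] := u01 m; have /andP[k0 k1] := u01 k.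
rewrite /Pi_cop (bigD1 m) //= (bigD1 k) 1?eq_sym //= mulrA.
by apply: ler_piMr; [exact: mulr_ge0 | apply: prodr_ile1 => i _; exact: u01].
Qed.

Theorem mainTheorem5 (R : realType) (d : nat) (hd : (2 <= d)%N)
  (Ls : 'I_d -> R -> R -> R) (hL : forall i, in_M2 (Ls i))
  (C : ('I_d -> R) -> R) (hC : is_copula C)
  (hNQD : forall u : 'I_d -> R, in_unit_cube u -> C u <= Pi_cop u)
  (k : 'I_d) (w : 'I_d -> R) (hw : forall i, 0 <= w i) :
  (phi C Ls w <= phi (@Pi_cop R d) Ls w)%E /\
  (phi (@Pi_cop R d) Ls w <=
     \big[Order.min/+oo%E]_(m < d | m != k) (Ls k (w m) (w k))%:E)%E.
Proof.
have itv_ge0 (t : R) : `[0%R, +oo[%classic t -> 0 <= t by rewrite /= in_itv /= andbT.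
have u01 t : 0 <= t -> in_unit_cube (fun i => d1 (Ls i) t (w i)).
  by move=> tge0 i; apply: (in_M2_d1_bounds (hL i) tge0 (hw i)).
split.
  apply: le_integral_nonmeas => t /itv_ge0 tge0; rewrite lee_fin.
    by apply: prodr_ge0 => i _; have /andP[] := u01 t tge0 i.
  exact/hNQD/u01.
apply: le_bigmin; first exact: leey.
move=> m mk; have [hm hk] := (hL m, hL k).
have := integral_rderiv_mul_le (in_M2_nondecr_nonexpansive hm (hw m))
  (in_M2_concave hm (hw m)) (in_M2_nondecr_nonexpansive hk (hw k))
  (in_M2_concave hk (hw k)) (fun x x0 => proj2 (andP (in_M2_bounds hm x0 (hw m))))
  (in_M2_0l hm (hw m)) (in_M2_0l hk (hw k)).
apply: le_trans.
apply: le_integral_nonmeas => t /itv_ge0 tge0; rewrite lee_fin (max_l tge0).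
  by have /andP[? _] := u01 t tge0 m; have /andP[? _] := u01 t tge0 k; exact: mulr_ge0.
exact: (Pi_cop_le_mul2 mk (u01 t tge0)).
Qed.
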